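(* Let $q \geq 5$ be a prime power and let $\mathcal{X}$ be a plane curve of degree $q-1$ defined over $\mathbb{F}_q$ without $\mathbb{F}_q$-linear components with $\mathrm{N}_q(\mathcal{X}) = (q-1)^2$. Let $i, j$ be (not necessarily distinct) non-negative integers and suppose $l_1, l_2$ are distinct lines defined over $\mathbb{F}_q$ with $\#(l_1 \cap \mathcal{X}(\mathbb{F}_q)) = i$ and $\#(l_2 \cap \mathcal{X}(\mathbb{F}_q)) = j$. If the point $P = l_1 \cap l_2$ lies in $\mathcal{X}(\mathbb{F}_q)$, then $i + j \geq q$.
   Context: $\mathcal{X}(\mathbb{F}_q)=\mathcal{X}\cap\mathbb{P}^2(\mathbb{F}_q)$, $\mathrm{N}_q(\mathcal{X})=\#\mathcal{X}(\mathbb{F}_q)$; ''without $\mathbb{F}_q$-linear components'' means no line defined over $\mathbb{F}_q$ is a component of $\mathcal{X}$. *)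

From HB Require Import structures.
From mathcomp Require Import all_boot all_order all_algebra all_field.
From mathcomp Require Import mpoly.
Set Implicit Arguments. Unset Strict Implicit. Unset Printing Implicit Defensive.
Import GRing.Theory.
Local Open Scope ring_scope.

Section PlaneCurves.
Variable F : finFieldType.

Definition coord3 := {ffun 'I_3 -> F}.

(* Canonical representative of a point of P^2(F): nonzero, and its first
   nonzero coordinate equals 1.  Each point of P^2(F) has exactly one such
   representative, so P^2(F) is identified with [set v | normalized v]. *)
Definition normalized (v : coord3) : bool :=
  [exists i : 'I_3, (v i == 1) && [forall j : 'I_3, (j < i)%N ==> (v j == 0)]].

Definition linform (a : coord3) : {mpoly F[3]} := \sum_(i < 3) a i *: 'X_i.

(* A line of P^2 defined over F, given by its normalized coefficient vector
   (distinct lines <-> distinct normalized coefficient vectors).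
   Point v lies on line a. *)
Definition on_line (a v : coord3) : bool := \sum_(i < 3) a i * v i == 0.

Definition rat_points (f : {mpoly F[3]}) : {set coord3} :=
  [set v : coord3 | normalized v && (f.@[v] == 0)].

Definition line_count (f : {mpoly F[3]}) (a : coord3) : nat :=
  #|[set v in rat_points f | on_line a v]|.

Definition has_rat_linear_component (f : {mpoly F[3]}) : Prop :=
  exists a : coord3, normalized a /\ exists g : {mpoly F[3]}, f = linform a * g.

End PlaneCurves.

From HB Require Import structures.
From mathcomp Require Import all_boot all_order all_algebra all_field.
From mathcomp Require Import mpoly.
From mathcomp Require Import ring zify.
Import GRing.Theory.
Local Open Scope ring_scope.
Set Implicit Arguments. Unset Strict Implicit. Unset Printing Implicit Defensive.

(* Write d = q - 1.  Every F_q-line meets X(F_q) in at most d points: if it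
   met it in q of its q + 1 points, the restriction of f to the line would be
   a binary form of degree q - 1 vanishing off one point, hence zero (its
   exponents are below q, so it is determined by its values); f would then
   vanish on the whole plane L = 0 and be divisible by L.  The q + 1 lines
   through P cover X(F_q), so d^2 - 1 <= (i - 1) + (j - 1) + d (d - 1),
   i.e. i + j >= d + 1 = q. *)

Section VanishingPolynomials.
Variable F : finFieldType.

Definition reduced n (p : {mpoly F[n]}) :=
  forall m, m \in msupp p -> forall i, (m i < #|F|)%N.

Definition mnm_behead n (m : 'X_{1..n.+1}) : 'X_{1..n} :=
  [multinom m (lift ord0 i) | i < n].

Definition vcons n (t : F) (v : 'I_n -> F) (i : 'I_n.+1) : F :=
  if unlift ord0 i is Some j then v j else t.

Definition coefX0 n (p : {mpoly F[n.+1]}) (j : nat) : {mpoly F[n]} :=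
  \sum_(m <- msupp p | m ord0 == j) p@_m *: 'X_[mnm_behead m].

Lemma mnm_behead_inj n (m m' : 'X_{1..n.+1}) :
  m ord0 = m' ord0 -> mnm_behead m = mnm_behead m' -> m = m'.
Proof.
move=> eq0 /mnmP eqS; apply/mnmP => i; case: (unliftP ord0 i) => [j ->|-> //].
by have := eqS j; rewrite !mnmE.
Qed.

Lemma mcoeff_coefX0 n (p : {mpoly F[n.+1]}) m :
  m \in msupp p -> (coefX0 p (m ord0))@_(mnm_behead m) = p@_m.
Proof.
move=> pm; rewrite /coefX0 raddf_sum /= big_mkcond (bigD1_seq m) //=.
rewrite eqxx mcoeffZ mcoeffX eqxx mulr1 big1 ?addr0 // => m' m'm.
case: eqP => // eq0; rewrite mcoeffZ mcoeffX.
by case: eqP => [eqS|]; [rewrite (mnm_behead_inj eq0 eqS) eqxx in m'm | rewrite mulr0].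
Qed.

Lemma msupp_coefX0 n (p : {mpoly F[n.+1]}) j m' :
  m' \in msupp (coefX0 p j) -> exists2 m, m \in msupp p & m' = mnm_behead m.
Proof.
move=> /msupp_sum_le /flattenP [s /mapP [m]].
rewrite mem_filter => /andP [_ pm] -> /msuppZ_le.
by rewrite msuppX inE => /eqP ->; exists m.
Qed.

Lemma reduced_coefX0 n (p : {mpoly F[n.+1]}) j :
  reduced p -> reduced (coefX0 p j).
Proof. by move=> rp m' /msupp_coefX0 [m pm ->] i; rewrite mnmE; apply: rp. Qed.

Lemma meval_coefX0 n (p : {mpoly F[n.+1]}) (t : F) (v : 'I_n -> F) :
  reduced p -> p.@[vcons t v] = \sum_(j < #|F|) (coefX0 p j).@[v] * t ^+ j.
Proof.
move=> rp; have evalS (m : 'X_{1..n.+1}) : \prod_(i < n.+1) vcons t v i ^+ m i =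
    \prod_(i < n) v i ^+ mnm_behead m i * t ^+ m ord0.
  rewrite big_ord_recl mulrC /vcons unlift_none.
  by under eq_bigr => i _ do rewrite liftK; under [in RHS]eq_bigr => i _ do rewrite mnmE.
transitivity (\sum_(j < #|F|) \sum_(m <- msupp p | m ord0 == j)
               p@_m * \prod_(i < n.+1) vcons t v i ^+ m i); last first.
  apply: eq_bigr => j _; rewrite /coefX0 raddf_sum mulr_suml.
  by apply: eq_bigr => m /eqP <-; rewrite /= mevalZ mevalX evalS mulrA.
rewrite mevalE (exchange_big_dep xpredT) //=; apply: eq_big_seq => m pm.
by rewrite (big_pred1 (Ordinal (rp m pm ord0))) // => j; rewrite eq_sym -val_eqE.
Qed.

Lemma reduced_mpoly_eq0 n (p : {mpoly F[n]}) :
  reduced p -> (forall v, p.@[v] = 0) -> p = 0.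
Proof.
elim: n p => [|n IH] p rp p0.
  apply/mpolyP => m; rewrite mcoeff0.
  have [pm|] := boolP (m \in msupp p); last exact: memN_msupp_eq0.
  have := p0 (fun _ => 0); rewrite mevalE (bigD1_seq m) //= big_ord0 mulr1.
  by rewrite big1 ?addr0 // => m' /negP[]; apply/eqP/mnmP => -[].
have coefX0_eq0 j : coefX0 p j = 0.
  have [jq|qj] := ltnP j #|F|; last first.
    rewrite /coefX0 big1_seq // => m /andP [/eqP mj pm].
    by have := rp m pm ord0; rewrite mj ltnNge qj.
  apply: IH => [|v]; first exact: reduced_coefX0.
  pose Q := \poly_(k < #|F|) (coefX0 p k).@[v].
  suff : Q = 0 by move/(congr1 (coefp j)); rewrite /= coef_poly jq coef0.
  apply/eqP; apply: contraT => Qn0.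
  have rootsQ : all (root Q) (enum F).
    by apply/allP => x _; rewrite /root horner_poly -meval_coefX0 ?p0.
  have := max_poly_roots Qn0 rootsQ (enum_uniq F).
  by rewrite -cardE ltnNge size_poly.
apply/mpolyP => m; rewrite mcoeff0.
have [pm|] := boolP (m \in msupp p); last exact: memN_msupp_eq0.
by rewrite -mcoeff_coefX0 // coefX0_eq0 mcoeff0.
Qed.

End VanishingPolynomials.

Section Homogeneous.
Variable R : comRingType.

Lemma meval_dhomogZ n d (p : {mpoly R[n]}) (c : R) (v : 'I_n -> R) :
  p \is d.-homog -> p.@[fun i => c * v i] = c ^+ d * p.@[v].
Proof.
move=> /dhomogP pd; rewrite !mevalE mulr_sumr; apply: eq_big_seq => m pm.
rewrite mulrCA; congr (_ * _).
under eq_bigr => i _ do rewrite exprMn.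
have -> : d = (\sum_i m i)%N by rewrite -(pd m pm); exact: mdegE.
by rewrite big_split /= prodrXr.
Qed.

Lemma meval_dhomog_eq0 n d (p : {mpoly R[n]}) (v : 'I_n -> R) :
  (0 < d)%N -> p \is d.-homog -> (forall i, v i = 0) -> p.@[v] = 0.
Proof.
move=> d_gt0 pd v0; rewrite (meval_eq (v2 := fun i => 0 * v i)) => [|i]; last first.
  by rewrite v0 mul0r.
by rewrite (meval_dhomogZ _ _ pd) expr0n gtn_eqF // mul0r.
Qed.

Lemma dhomog_mnm_le n d (p : {mpoly R[n]}) m i :
  p \is d.-homog -> m \in msupp p -> (m i <= d)%N.
Proof.
move=> /dhomogP pd pm; have -> : d = (\sum_i m i)%N by rewrite -(pd m pm); exact: mdegE.
by rewrite (bigD1 i) //= leq_addr.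
Qed.

Lemma dhomog_mX n (i : 'I_n) : ('X_i : {mpoly R[n]}) \is 1.-homog.
Proof. by rewrite dhomogX; apply/eqP; exact: mdeg1. Qed.

Lemma comp_mpoly_dhomog n k d (p : {mpoly R[n]}) (lq : n.-tuple {mpoly R[k]}) :
  p \is d.-homog -> (forall i, tnth lq i \is 1.-homog) -> p \mPo lq \is d.-homog.
Proof.
move=> /dhomogP pd lq1; rewrite comp_mpolyEX big_seq; apply: rpred_sum => m pm.
apply: rpredZ; rewrite comp_mpolyX.
have -> : d = (\sum_i m i)%N by rewrite -(pd m pm); exact: mdegE.
elim: (index_enum _) => [|i s IH]; first by rewrite !big_nil dhomog1.
rewrite !big_cons; apply: dhomogM => //.
by have := dhomogMn (m i) (lq1 i); rewrite mul1n.
Qed.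

Section CongruenceModulo.
Variables (n : nat) (L : {mpoly R[n]}).

Definition eqmod (x y : {mpoly R[n]}) := exists g, x - y = L * g.

Lemma eqmod_refl x : eqmod x x.
Proof. by exists 0; rewrite subrr mulr0. Qed.

Lemma eqmodD x y x' y' : eqmod x y -> eqmod x' y' -> eqmod (x + x') (y + y').
Proof. by move=> [g e] [g' e']; exists (g + g'); rewrite mulrDr -e -e'; ring. Qed.

Lemma eqmodM x y x' y' : eqmod x y -> eqmod x' y' -> eqmod (x * x') (y * y').
Proof.
move=> [g e] [g' e']; exists (x * g' + g * y').
have -> : x * x' - y * y' = x * (x' - y') + (x - y) * y' by ring.
by rewrite e e'; ring.
Qed.

Lemma eqmodX x y k : eqmod x y -> eqmod (x ^+ k) (y ^+ k).
Proof.
by move=> e; elim: k => [|k IH]; [exact: eqmod_refl | rewrite !exprS; apply: eqmodM].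
Qed.

Lemma eqmod_comp (lq : n.-tuple {mpoly R[n]}) p :
  (forall i, eqmod 'X_i (tnth lq i)) -> eqmod p (p \mPo lq).
Proof.
move=> eqX; rewrite {1}(mpolyE p) comp_mpolyEX.
apply: big_ind2 => [|x1 x2 y1 y2|m _]; [exact: eqmod_refl | exact: eqmodD |].
rewrite -!mul_mpolyC comp_mpolyX mpolyXE_id; apply: eqmodM; first exact: eqmod_refl.
apply: (big_ind2 eqmod) => [|x1 x2 y1 y2|i _]; [exact: eqmod_refl | exact: eqmodM |].
exact: eqmodX.
Qed.

End CongruenceModulo.
End Homogeneous.

Section ProjectivePlane.
Variable F : finFieldType.
Implicit Types (a b n u v w : coord3 F).

Lemma normalizedP v :
  reflect (exists2 k : 'I_3, v k = 1 & forall j : 'I_3, (j < k)%N -> v j = 0)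
          (normalized v).
Proof.
apply: (iffP existsP) => [[k /andP [/eqP vk /forallP v0]]|[k vk v0]].
  by exists k => // j jk; apply/eqP; exact: (implyP (v0 j)).
by exists k; rewrite vk eqxx; apply/forallP => j; apply/implyP => /v0 ->.
Qed.

Lemma normalized_neq0 v : normalized v -> exists i, v i != 0.
Proof. by case/normalizedP => k vk _; exists k; rewrite vk oner_eq0. Qed.

Lemma normalized_scale_eq u v (c : F) :
  normalized u -> normalized v -> (forall i, u i = c * v i) -> u = v.
Proof.
case/normalizedP => i ui u0 /normalizedP [k vk v0] uv.
have c0 : c != 0.
  by apply/eqP => c0; move: ui; rewrite uv c0 mul0r => /eqP; rewrite eq_sym oner_eq0.
have ik : i = k.
  apply: val_inj; case: (ltngtP i k) => [/v0 vi|/u0 uk|//].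
    by move: ui; rewrite uv vi mulr0 => /eqP; rewrite eq_sym oner_eq0.
  by move: uk; rewrite uv vk mulr1 => /eqP; rewrite (negbTE c0).
have c1 : c = 1 by move: ui; rewrite uv ik vk mulr1.
by apply/(@ffunP _ (fun=> F)) => j; rewrite uv c1 mul1r.
Qed.

Lemma coord3_eq0_or_normalized v :
  (forall i, v i = 0) \/
  exists2 n, normalized n & exists2 mu, mu != 0 & forall i, v i = mu * n i.
Proof.
have [i0 vi0|] := pickP (fun i => v i != 0); last first.
  by move=> v0; left => i; apply/eqP/negbFE; exact: v0.
right; case: (@arg_minnP _ i0 (fun i => v i != 0) val vi0) => k vk kmin.
exists [ffun i => v i / v k]; last by exists (v k) => // i; rewrite ffunE mulrC divfK.
apply/normalizedP; exists k; first by rewrite ffunE divff.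
move=> j jk; rewrite ffunE; have [->|vj] := eqVneq (v j) 0; first by rewrite mul0r.
by have := kmin j vj; rewrite leqNgt jk.
Qed.

Lemma on_line_sym a v : on_line a v = on_line v a.
Proof. by rewrite /on_line; under eq_bigr do rewrite mulrC. Qed.

Lemma on_line_scale a v n (mu : F) :
  mu != 0 -> (forall i, v i = mu * n i) -> on_line a v = on_line a n.
Proof.
move=> mu0 vn; rewrite /on_line.
under eq_bigr do rewrite vn mulrCA.
by rewrite -mulr_sumr mulf_eq0 (negbTE mu0).
Qed.

Lemma on_line_comb a u w (y0 y1 : F) :
  on_line a u -> on_line a w -> on_line a [ffun i => y0 * u i + y1 * w i].
Proof.
rewrite /on_line => /eqP au /eqP aw.
under eq_bigr do rewrite ffunE mulrDr mulrCA [a _ * _]mulrCA.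
by rewrite big_split -!mulr_sumr /= au aw !mulr0 addr0.
Qed.

Lemma exists_line_through u v :
  exists2 a, normalized a & on_line a u && on_line a v.
Proof.
pose M : 'M[F]_(3, 2) := \matrix_(i, j) (if j == 0 then u i else v i).
have kerM0 : kermx M != 0.
  rewrite -mxrank_eq0 mxrank_ker subn_eq0 -ltnNge.
  exact: leq_ltn_trans (rank_leq_col M) _.
set r := nz_row (kermx M).
have rM : r *m M = 0 by apply/sub_kermxP; exact: nz_row_sub.
have dotu : \sum_i r 0 i * u i = 0.
  by move/matrixP: rM => /(_ 0 0); rewrite !mxE; under eq_bigr do rewrite mxE.
have dotv : \sum_i r 0 i * v i = 0.
  by move/matrixP: rM => /(_ 0 1); rewrite !mxE; under eq_bigr do rewrite mxE.
case: (coord3_eq0_or_normalized [ffun i => r 0 i]) => [r0|[a na [mu mu0 ra]]].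
  case/eqP: kerM0; apply/eqP; rewrite -nz_row_eq0 -/r.
  by apply/eqP/rowP => i; rewrite mxE -(r0 i) ffunE.
have on_a (x : coord3 F) : \sum_i r 0 i * x i = 0 -> on_line a x.
  rewrite on_line_sym -(on_line_scale _ mu0 ra) /on_line => rx.
  by under eq_bigr do rewrite ffunE mulrC; rewrite rx.
by exists a => //; rewrite !on_a.
Qed.

Definition line_points b := [set v | normalized v && on_line b v].

Lemma card_line_points b : normalized b -> (#|line_points b| <= #|F|.+1)%N.
Proof.
case/normalizedP => k bk _.
pose j1 := lift k ord0; pose j2 := lift k (lift ord0 (ord0 : 'I_1)).
have ordP (i : 'I_3) : [\/ i = k, i = j1 | i = j2].
  case: (unliftP k i) => [j ->|->]; last exact: Or31.
  by case: j => -[|[|//]] jlt; [apply: Or32 | apply: Or33]; congr lift; apply: val_inj.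
have onb v : on_line b v -> v k = - (b j1 * v j1 + b j2 * v j2).
  rewrite /on_line (bigD1_ord k) //= bk mul1r !big_ord_recl big_ord0 addr0.
  by rewrite -/j1 -/j2 addr_eq0 => /eqP ->.
have scaled v w (c : F) : v \in line_points b -> w \in line_points b ->
    w j1 = c * v j1 -> w j2 = c * v j2 -> w = v.
  rewrite !inE => /andP [nv /onb vk] /andP [nw /onb wk] e1 e2.
  apply: (normalized_scale_eq (c := c)) => // i.
  by case: (ordP i) => ->; rewrite ?e1 ?e2 // wk vk e1 e2; ring.
(* On the line the pivot coordinate is determined by the other two, so a point
   is determined by the ratio v j2 : v j1. *)
pose phi v := if v j1 == 0 then None else Some (v j2 / v j1).
have phi_inj : {in line_points b &, injective phi}.
  move=> v w vb wb; rewrite /phi.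
  have [v1|v1] := eqVneq (v j1) 0; have [w1|w1] := eqVneq (w j1) 0 => //.
  - move=> _; have v2 : v j2 != 0.
      move: vb; rewrite inE => /andP [/normalized_neq0 [i vi] /onb vk].
      apply/eqP => v2; move: vi.
      by case: (ordP i) => ->; rewrite ?vk ?v1 ?v2 ?mulr0 ?addr0 ?oppr0 eqxx.
    apply/esym/(scaled v w (w j2 / v j2)) => //; first by rewrite v1 w1 mulr0.
    by rewrite divfK.
  - case=> r; apply/esym/(scaled v w (w j1 / v j1)) => //; first by rewrite divfK.
    by rewrite -[w j2](divfK w1) -r; field.
rewrite -(card_in_imset phi_inj); apply: leq_trans (max_card _) _.
by rewrite card_option.
Qed.

End ProjectivePlane.

Section FormsOfDegreeQMinusOne.
Variable F : finFieldType.
Local Notation q := #|F|.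
Local Notation d := #|F|.-1.
Implicit Types a u w : coord3 F.

Lemma card_finField_pred_gt0 : (0 < d)%N.
Proof. by rewrite -subn1 subn_gt0 card_finNzRing_gt1. Qed.

Lemma card_finFieldE : q = d.+1.
Proof. by rewrite prednK // ltnW ?card_finNzRing_gt1. Qed.

Lemma pred_card_lt : (d < q)%N.
Proof. by rewrite {2}card_finFieldE. Qed.

Lemma expf_pred_card (x : F) : x != 0 -> x ^+ d = 1.
Proof.
by move=> x0; apply: (mulfI x0); rewrite -exprS -card_finFieldE expf_card mulr1.
Qed.

Lemma dhomog_reduced n (p : {mpoly F[n]}) : p \is d.-homog -> reduced p.
Proof.
by move=> pd m pm i; apply: leq_ltn_trans (dhomog_mnm_le _ pd pm) pred_card_lt.
Qed.

Lemma dhomog_eval_eq0 (f : {mpoly F[3]}) (v : 'I_3 -> F) :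
  f \is d.-homog ->
  (forall n mu, normalized n -> mu != 0 -> (forall i, v i = mu * n i) -> f.@[n] = 0) ->
  f.@[v] = 0.
Proof.
move=> fd fn.
case: (coord3_eq0_or_normalized [ffun i => v i]) => [v0|[n nn [mu mu0 vn]]].
  by apply: (meval_dhomog_eq0 card_finField_pred_gt0 fd) => i; rewrite -(v0 i) ffunE.
have {}vn i : v i = mu * n i by rewrite -vn ffunE.
by rewrite (meval_eq _ vn) (meval_dhomogZ _ _ fd) (fn n mu) ?mulr0.
Qed.

Lemma binary_form_eq0 (G : {mpoly F[2]}) :
  G \is d.-homog -> (forall y, y ord0 != 0 -> G.@[y] = 0) -> G = 0.
Proof.
move=> Gd G0; pose c := G.@[fun i : 'I_2 => (i : nat)%:R].
have ord2 (i : 'I_2) : i = ord0 \/ i = ord_max.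
  by case: i => -[|[|//]] ilt; [left | right]; apply: val_inj.
have evalX (m : 'X_{1..2}) y : 'X_[m].@[y] = y ord0 ^+ m ord0 * y ord_max ^+ m ord_max.
  rewrite mevalX !big_ord_recl big_ord0 mulr1.
  by rewrite (_ : lift ord0 ord0 = ord_max) //; apply: val_inj.
have G_axis y : y ord0 = 0 -> G.@[y] = y ord_max ^+ d * c.
  move=> y0; rewrite -(meval_dhomogZ _ _ Gd); apply: meval_eq => i.
  by case: (ord2 i) => ->; rewrite /= ?y0 ?mulr0 ?mulr1.
(* As functions, G = c (X_1^d - X_0^d X_1^d) since y^d = 1 for y != 0; both
   sides are reduced, and G has no monomial of degree 2d. *)
pose m1 : 'X_{1..2} := [multinom (i * d)%N | i < 2].
pose m2 : 'X_{1..2} := [multinom d | i < 2].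
pose H := G - c *: ('X_[m1] - 'X_[m2]).
have H0 : H = 0.
  apply: reduced_mpoly_eq0 => [m|y].
    move=> /msuppB_le; rewrite mem_cat => /orP [/(dhomog_reduced Gd)//|].
    move=> /msuppZ_le /msuppB_le; rewrite mem_cat !msuppX !inE.
    case/orP => /eqP -> i; rewrite mnmE ?pred_card_lt //.
    by case: (ord2 i) => ->; rewrite /= ?mul0n ?mul1n; apply: leq_ltn_trans pred_card_lt.
  rewrite /H mevalB mevalZ mevalB !evalX !mnmE /= mul0n mul1n expr0 mul1r.
  have [y0|y0] := eqVneq (y ord0) 0.
    by rewrite G_axis // y0 expr0n gtn_eqF ?card_finField_pred_gt0 // mul0r subr0; ring.
  by rewrite G0 // (expf_pred_card y0) mul1r subrr mulr0 subrr.
have c0 : c = 0.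
  have := congr1 (mcoeff m2) H0; rewrite mcoeff0 !mcoeffB mcoeffZ !mcoeffB !mcoeffX eqxx.
  rewrite (dhomog_nemf_coeff Gd); last first.
    suff : (mdeg m2 == d) = false by move=> ->.
    rewrite mdegE big_ord_recl big_ord1 !mnmE -[X in _ == X]addn0 eqn_add2l.
    by rewrite gtn_eqF ?card_finField_pred_gt0.
  have m12 : m1 != m2.
    apply/eqP => /(congr1 (fun m : 'X_{1..2} => m ord0)); rewrite !mnmE mul0n.
    by move=> d0; have := card_finField_pred_gt0; rewrite -d0.
  by rewrite (negbTE m12) /= !sub0r mulrN1 opprK.
by move: H0; rewrite /H c0 scale0r subr0.
Qed.

Lemma eval_eq0_punctured_line (f : {mpoly F[3]}) a u w :
  f \is d.-homog -> normalized u -> normalized w -> u != w ->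
  on_line a u -> on_line a w ->
  {in line_points a, forall v, v != w -> f.@[v] = 0} -> f.@[w] = 0.
Proof.
move=> fd nu nw uw au aw f0.
(* G (y0, y1) = f (y0 u + y1 w) vanishes off the point (0 : 1) standing for w. *)
pose G : {mpoly F[2]} := f \mPo [tuple u i *: 'X_ord0 + w i *: 'X_ord_max | i < 3].
have evalG y : G.@[y] = f.@[fun i => y ord0 * u i + y ord_max * w i].
  rewrite comp_mpoly_meval; apply: meval_eq => i.
  by rewrite tnth_mktuple mevalD !mevalZ !mevalXU mulrC [w i * _]mulrC.
have Gd : G \is d.-homog.
  apply: comp_mpoly_dhomog => // i; rewrite tnth_mktuple.
  by apply: rpredD; apply: dhomogZ; apply: dhomog_mX.
have G0 : G = 0.
  apply: binary_form_eq0 => // y y0; rewrite evalG.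
  apply: dhomog_eval_eq0 => // n mu nn mu0 zn; apply: f0.
    have {}zn i : [ffun i => y ord0 * u i + y ord_max * w i] i = mu * n i.
      by rewrite ffunE zn.
    by rewrite inE nn -(on_line_scale a mu0 zn) on_line_comb.
  apply: contraNneq uw => nw_eq.
  apply/eqP/(normalized_scale_eq (c := (mu - y ord_max) / y ord0)) => // i.
  have /= := zn i; rewrite nw_eq => zi.
  have {}zi : y ord0 * u i = (mu - y ord_max) * w i by rewrite mulrBl -zi; ring.
  by rewrite -[u i](mulKf y0) zi; field.
have := evalG (fun i => (i : nat)%:R); rewrite G0 meval0 => /esym <-.
by apply: meval_eq => i /=; rewrite mul0r add0r mul1r.
Qed.

Lemma linform_meval a (v : 'I_3 -> F) : (linform a).@[v] = \sum_i a i * v i.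
Proof.
by rewrite /linform raddf_sum; apply: eq_bigr => i _; rewrite /= mevalZ mevalXU.
Qed.

Lemma linform_dhomog a : linform a \is 1.-homog.
Proof. by apply: rpred_sum => i _; apply: dhomogZ; apply: dhomog_mX. Qed.

Lemma linform_dvd_of_line_vanishing (f : {mpoly F[3]}) a :
  f \is d.-homog -> normalized a ->
  {in line_points a, forall v : coord3 F, f.@[v] = 0} -> exists g, f = linform a * g.
Proof.
move=> fd na fa.
have [e ae] : exists e : 'I_3 -> F, \sum_i a i * e i = 1.
  case: (normalized_neq0 na) => k ak; exists (fun i => if i == k then (a k)^-1 else 0).
  rewrite (bigD1 k) //= eqxx mulfV // big1 ?addr0 // => i /negbTE ->.
  by rewrite mulr0.
(* sigma projects onto the plane L = 0 along e, so f \mPo sigma vanishes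
   everywhere, while f = f \mPo sigma modulo L. *)
pose sigma := [tuple 'X_i - e i *: linform a | i < 3].
have f_sigma : f \mPo sigma = 0.
  apply: reduced_mpoly_eq0 => [|v].
    apply/dhomog_reduced/comp_mpoly_dhomog => // i; rewrite tnth_mktuple.
    by apply: rpredB; [apply: dhomog_mX | apply/dhomogZ/linform_dhomog].
  rewrite comp_mpoly_meval; apply: dhomog_eval_eq0 => // n mu nn mu0 vn; apply: fa.
  have {}vn i : [ffun i => (tnth sigma i).@[v]] i = mu * n i by rewrite ffunE.
  rewrite inE nn -(on_line_scale a mu0 vn) /on_line /=.
  under eq_bigr do
    rewrite ffunE tnth_mktuple mevalB mevalZ mevalXU linform_meval mulrBr mulrA.
  by rewrite sumrB -mulr_suml ae mul1r subrr.
have [g fg] : eqmod (linform a) f (f \mPo sigma).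
  apply: eqmod_comp => i; exists (e i)%:MP.
  by rewrite tnth_mktuple opprB addrC subrK -mul_mpolyC mulrC.
by exists g; rewrite -fg f_sigma subr0.
Qed.

Lemma eval_eq0_on_line (f : {mpoly F[3]}) a :
  f \is d.-homog -> normalized a -> (q <= line_count f a)%N ->
  {in line_points a, forall v : coord3 F, f.@[v] = 0}.
Proof.
move=> fd na qc w wa; apply/eqP; apply: contraT => fw.
set Z := [set v in rat_points f | on_line a v].
have ZE : Z = line_points a :\ w.
  apply/eqP; rewrite eqEcard; apply/andP; split.
    apply/subsetP => v; rewrite !inE => /andP [/andP [nv fv] av].
    rewrite nv av /= andbT.
    by apply/eqP => vw; move: fw; rewrite -vw fv.
  have := card_line_points na; rewrite (cardsD1 w) wa add1n ltnS => cw.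
  exact: leq_trans cw qc.
have [u uZ] : exists u, u \in Z.
  by apply/set0Pn; rewrite -card_gt0; apply: leq_trans qc; rewrite card_finFieldE.
move: (uZ) wa; rewrite ZE !inE => /andP [uw /andP [nu au]] /andP [nw aw].
suff : f.@[w] = 0 by move/eqP; rewrite (negbTE fw).
apply: (eval_eq0_punctured_line fd nu nw uw au aw) => v va vw.
have : v \in Z by rewrite ZE in_setD1 vw va.
by rewrite !inE => /andP [/andP [_ /eqP]].
Qed.

Lemma line_count_le (f : {mpoly F[3]}) a :
  f \is d.-homog -> ~ has_rat_linear_component f -> normalized a ->
  (line_count f a <= d)%N.
Proof.
move=> fd nlin na; rewrite leqNgt -card_finFieldE; apply/negP => qc; apply: nlin.
exists a; split => //.
by apply: linform_dvd_of_line_vanishing => //; apply: eval_eq0_on_line.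
Qed.

End FormsOfDegreeQMinusOne.

Lemma card_bigcup_le (I T : finType) (A : {pred I}) (B : I -> {set T}) :
  (#|\bigcup_(i in A) B i| <= \sum_(i in A) #|B i|)%N.
Proof.
apply: (big_ind2 (fun (X : {set T}) n => #|X| <= n)%N) => [|X1 n1 X2 n2 h1 h2|//].
  by rewrite cards0.
by apply: leq_trans (leq_add h1 h2); rewrite cardsU leq_subr.
Qed.

Lemma card_rat_points_pencil (F : finFieldType) (f : {mpoly F[3]}) (P : coord3 F) :
  P \in rat_points f ->
  (#|rat_points f|.-1 <= \sum_(a in line_points P) (line_count f a).-1)%N.
Proof.
move=> XP; pose Xa a := [set v in rat_points f | on_line a v] :\ P.
have cardXa a : a \in line_points P -> #|Xa a| = (line_count f a).-1.
  rewrite inE on_line_sym => /andP [_ aP].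
  by rewrite /line_count [in RHS](cardsD1 P) in_set XP aP.
rewrite (cardsD1 P) XP add1n /=.
apply: (@leq_trans (\sum_(a in line_points P) #|Xa a|)); last first.
  by rewrite (eq_bigr _ cardXa).
apply: leq_trans (card_bigcup_le _ _); apply: subset_leq_card.
apply/subsetP => v; rewrite in_setD1 => /andP [vP vX].
have [a na /andP [aP av]] := exists_line_through P v.
apply/bigcupP; exists a; first by rewrite inE na on_line_sym.
by rewrite /Xa in_setD1 vP in_set vX av.
Qed.

Theorem corollary3p5 (F : finFieldType) (f : {mpoly F[3]}) (i j : nat)
    (l1 l2 P : coord3 F) :
  (5 <= #|F|)%N ->
  f != 0 -> f \is (#|F|.-1).-homog ->
  ~ has_rat_linear_component f ->
  #|rat_points f| = (#|F|.-1 ^ 2)%N ->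
  normalized l1 -> normalized l2 -> l1 != l2 ->
  line_count f l1 = i -> line_count f l2 = j ->
  P \in rat_points f -> on_line l1 P -> on_line l2 P ->
  (#|F| <= i + j)%N.
Proof.
move=> _ _ fd nlin cardX n1 n2 l12 <- <- XP o1 o2.
have l1A : l1 \in line_points P by rewrite inE n1 on_line_sym.
have l2A : l2 \in line_points P :\ l1 by rewrite !inE eq_sym l12 n2 on_line_sym.
have := card_rat_points_pencil XP; rewrite (big_setD1 l1) //= (big_setD1 l2) //=.
set r := #|line_points P :\ l1 :\ l2|; set d := #|F|.-1 in fd cardX *.
have rest :
    (\sum_(a in line_points P :\ l1 :\ l2) (line_count f a).-1 <= r * d.-1)%N.
  rewrite -sum_nat_const; apply: leq_sum => a.
  rewrite !inE => /andP [_ /andP [_ /andP [na _]]].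
  by have := line_count_le fd nlin na; lia.
have r_le : (r <= d)%N.
  have := XP; rewrite inE => /andP [/card_line_points].
  by rewrite (cardsD1 l1) l1A (cardsD1 l2) l2A card_finFieldE.
have i_gt0 : (0 < line_count f l1)%N by apply/card_gt0P; exists P; rewrite inE XP.
have j_gt0 : (0 < line_count f l2)%N by apply/card_gt0P; exists P; rewrite inE XP.
have rd : (r * d.-1 <= d * d.-1)%N by rewrite leq_mul2r r_le orbT.
have := card_finField_pred_gt0 F; rewrite cardX card_finFieldE -/d /= -mulnn.
move: rest rd; set s := \sum_(_ in _) _.
nia.
Qed.
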